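(* Let $H$ be an infinite-dimensional separable complex Hilbert space with orthonormal basis $(e_i)_{i\in\mathbb{N}}$, and let $D=\sum_{i\in\mathbb{N}}\lambda_i\, e_i\otimes e_i$ be a bounded diagonal operator such that $\lambda_i\neq\lambda_j$ for all $i\neq j$ and such that $\sigma(D)$ is a perfect compact set. Then there exists a vector $u\in H$ such that (1) $\langle u,e_i\rangle\neq 0$ for all $i\in\mathbb{N}$, and (2) for all $z\in\sigma(D)\setminus\sigma_p(D)$, $$\sum_{i\in\mathbb{N}}\frac{|\langle u,e_i\rangle|^2}{|z-\lambda_i|^2}=\infty.$$
   Context: For $u,v\in H$, $u\otimes v$ denotes the operator $h\mapsto\langle h,v\rangle u$, so $De_i=\lambda_i e_i$. $\sigma(D)$ is the spectrum of $D$ (here the closure of $\{\lambda_i\}$) and $\sigma_p(D)=\{\lambda_i:i\in\mathbb{N}\}$ its set of eigenvalues. A set is perfect if it has no isolated points. *)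

(* C = R[i] (mathcomp-real-closed complex
   numbers over a realType R); its topology is the one induced by the complex
   modulus (numFieldType normed structure from mathcomp-analysis). *)
From mathcomp Require Import all_boot all_order all_algebra.
From mathcomp Require Import all_classical all_reals all_analysis.
From mathcomp Require Import complex.
Import Order.TTheory GRing.Theory Num.Theory.
Import numFieldNormedType.Exports.
Set Implicit Arguments. Unset Strict Implicit. Unset Printing Implicit Defensive.
Local Open Scope classical_set_scope.
Local Open Scope ring_scope.

Definition Cx (R : realType) : numFieldType := R[i].

Definition cmod (R : realType) (z : Cx R) : R := ComplexField.Normc.normc z.

(* Coordinates of a vector of H in the orthonormal basis (e_i): H is identified
   with l^2(N) via u |-> (<u, e_i>)_i.  A coefficient sequence is in H iff it is
   square summable. *)
Definition l2 (R : realType) : set (nat -> Cx R) :=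
  [set c | (\sum_(0 <= i <oo) ((cmod (c i) ^+ 2)%:E) < +oo)%E].

Definition bounded_diag (R : realType) (lam : nat -> Cx R) : Prop :=
  exists M : R, forall i, cmod (lam i) <= M.

Definition spec_diag (R : realType) (lam : nat -> Cx R) : set (Cx R) :=
  closure (range lam).

Definition pspec_diag (R : realType) (lam : nat -> Cx R) : set (Cx R) :=
  range lam.

From mathcomp Require Import all_boot all_order all_algebra.
From mathcomp Require Import all_classical all_reals all_analysis.
From mathcomp Require Import complex lra ring zify.
Import Order.TTheory GRing.Theory Num.Theory.
Import numFieldNormedType.Exports.
Local Open Scope classical_set_scope.
Local Open Scope ring_scope.
Set Implicit Arguments. Unset Strict Implicit. Unset Printing Implicit Defensive.

(* Let [A] bound the real and imaginary parts of sigma(D).  At level [m],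
   cover [-A, A]^2 by a grid of [2^(2^m) x 2^(2^m)] points of mesh [h_m], and
   attach to every grid point [g] an index [i >= m] such that [lambda_i] is,
   up to [h_m], at least as close to [g] as any point of
   sigma(D) \ sigma_p(D).  Each chosen index receives the weight
   [h_m^2 / 2^m]; a level has total mass [4 A^2 / 2^m], so
   [|u_i|^2 := 2^-i + (weights of i)] is summable and nowhere zero.
   If [z] lies in sigma(D) \ sigma_p(D), every grid point at sup-distance
   about [N h_m] from [z] contributes at least [1 / (25 N^2 2^m)] to the
   series; summing over the [2^m] dyadic annuli around [z] gives at least
   [3/100] per level, so the series diverges. *)

Section DyadicGrid.
Variables (R : realType) (h X Y : R) (phi : nat -> nat -> R).
Hypothesis h_gt0 : 0 < h.
Hypothesis phi_ge0 : forall a b, 0 <= phi a b.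
Hypothesis phi_ge_dist : forall a b (N : nat), (0 < N)%N ->
  `|X - a%:R * h| <= N%:R * h -> `|Y - b%:R * h| <= N%:R * h ->
  (25 * N%:R ^+ 2)^-1 <= phi a b.

Lemma dist_grid_le (a0 a n : nat) (x : R) :
  a0%:R * h <= x -> x < (a0 + n)%:R * h -> (a0 <= a <= a0 + n)%N ->
  `|x - a%:R * h| <= n%:R * h.
Proof.
move=> x_ge x_lt /andP[a0_le a_le].
have a0_a : a0%:R * h <= a%:R * h by rewrite ler_pM2r // ler_nat.
have a_a0n : a%:R * h <= (a0 + n)%:R * h by rewrite ler_pM2r // ler_nat.
move: x_lt a_a0n; rewrite natrD mulrDl => x_lt a_a0n.
rewrite ler_norml; apply/andP; split; lra.
Qed.

Lemma grid_subsquare_ge (a0 b0 a1 b1 n : nat) : (0 < n)%N ->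
  a0%:R * h <= X -> X < (a0 + 2 * n)%:R * h ->
  b0%:R * h <= Y -> Y < (b0 + 2 * n)%:R * h ->
  (a0 <= a1 <= a0 + n)%N -> (b0 <= b1 <= b0 + n)%N ->
  1 / 100 <= \sum_(a1 <= a < a1 + n) \sum_(b1 <= b < b1 + n) phi a b.
Proof.
move=> n_gt0 X_ge X_lt Y_ge Y_lt /andP[a0_a1 a1_le] /andP[b0_b1 b1_le].
have -> : 1 / 100 = \sum_(a1 <= a < a1 + n) \sum_(b1 <= b < b1 + n)
                       (25 * (2 * n)%:R ^+ 2)^-1 :> R.
  rewrite !sumr_const_nat !addKn -mulr_natr -mulr_natr natrM.
  have n_neq0 : (n%:R : R) != 0 by rewrite pnatr_eq0 -lt0n.
  by field; rewrite n_neq0.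
apply: ler_sum_nat => a /andP[a_ge a_lt].
apply: ler_sum_nat => b /andP[b_ge b_lt].
apply: phi_ge_dist; first by rewrite muln_gt0.
  by apply: (dist_grid_le X_ge X_lt); apply/andP; lia.
by apply: (dist_grid_le Y_ge Y_lt); apply/andP; lia.
Qed.

(* Split the square into four quadrants: the one containing [(X, Y)] is
   handled by induction, each of the three others contributes [1/100]. *)
Lemma grid_sum_ge (j : nat) : forall a0 b0 : nat,
  a0%:R * h <= X -> X < (a0 + 2 ^ j)%:R * h ->
  b0%:R * h <= Y -> Y < (b0 + 2 ^ j)%:R * h ->
  3 / 100 * j%:R <=
    \sum_(a0 <= a < a0 + 2 ^ j) \sum_(b0 <= b < b0 + 2 ^ j) phi a b.
Proof.
elim: j => [|j IH] a0 b0 X_ge X_lt Y_ge Y_lt.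
  by rewrite mulr0; apply: sumr_ge0 => a _; apply: sumr_ge0.
set n := (2 ^ j)%N.
have n_gt0 : (0 < n)%N by rewrite expn_gt0.
have pow_n : (2 ^ j.+1 = n + n)%N by rewrite expnS mul2n -addnn.
have two_n : (2 * n = n + n)%N by rewrite mul2n -addnn.
rewrite pow_n (addnA a0) (addnA b0) in X_lt Y_lt *.
rewrite (@big_cat_nat _ _ _ (a0 + n)) ?leq_addr //=.
have split_b a : \sum_(b0 <= b < b0 + n + n) phi a b =
   \sum_(b0 <= b < b0 + n) phi a b + \sum_(b0 + n <= b < b0 + n + n) phi a b.
  by rewrite (@big_cat_nat _ _ _ (b0 + n)) ?leq_addr.
rewrite (eq_bigr _ (fun a _ => split_b a)) (eq_bigr _ (fun a _ => split_b a)).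
rewrite !big_split /=.
have X_lt' : X < (a0 + 2 * n)%:R * h by rewrite two_n addnA.
have Y_lt' : Y < (b0 + 2 * n)%:R * h by rewrite two_n addnA.
have Q := grid_subsquare_ge n_gt0 X_ge X_lt' Y_ge Y_lt'.
have Q00 := Q a0 b0 ltac:(lia) ltac:(lia).
have Q01 := Q a0 (b0 + n) ltac:(lia) ltac:(lia).
have Q10 := Q (a0 + n) b0 ltac:(lia) ltac:(lia).
have Q11 := Q (a0 + n) (b0 + n) ltac:(lia) ltac:(lia).
have -> : ((j.+1)%:R : R) = j%:R + 1 by rewrite -addn1 natrD.
case: (ltP X ((a0 + n)%:R * h)) => Xn; case: (ltP Y ((b0 + n)%:R * h)) => Yn.
- have := IH a0 b0 X_ge Xn Y_ge Yn; lra.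
- have := IH a0 (b0 + n) X_ge Xn Yn Y_lt; lra.
- have := IH (a0 + n) b0 Xn X_lt Y_ge Yn; lra.
- have := IH (a0 + n) (b0 + n) Xn X_lt Yn Y_lt; lra.
Qed.

End DyadicGrid.

Section ComplexModulus.
Variable R : realType.
Implicit Types x y z : Cx R.

Lemma cmod_ge0 z : 0 <= cmod z.
Proof. by case: z => a b; rewrite /cmod /= sqrtr_ge0. Qed.

Lemma cmodD x y : cmod (x + y) <= cmod x + cmod y.
Proof. exact: le_normcD. Qed.

Lemma distcC x y : cmod (x - y) = cmod (y - x).
Proof. by rewrite /cmod -normcN opprB. Qed.

Lemma distc_triangle x y w : cmod (x - y) <= cmod (x - w) + cmod (w - y).
Proof. by have := cmodD (x - w) (w - y); rewrite addrA subrK. Qed.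

Lemma distc_gt0 x y : x <> y -> 0 < cmod (x - y).
Proof.
move=> x_neq_y; rewrite lt_neqAle cmod_ge0 andbT.
apply/eqP => /esym /ComplexField.Normc.eq0_normc /eqP.
by rewrite subr_eq0 => /eqP.
Qed.

Lemma cmod_le_ReIm (a b : R) : cmod (a +i* b)%C <= `|a| + `|b|.
Proof.
rewrite /cmod /= -(@ger0_norm _ (`|a| + `|b|)) ?addr_ge0 //.
rewrite -sqrtr_sqr; apply: ler_wsqrtr.
rewrite sqrrD !real_normK ?num_real //.
have : 0 <= `|a| * `|b| *+ 2 by rewrite mulrn_wge0 // mulr_ge0.
lra.
Qed.

Lemma Re_le_cmod z : `|complex.Re z| <= cmod z.
Proof.
case: z => a b; rewrite /cmod /= -sqrtr_sqr; apply: ler_wsqrtr.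
by rewrite lerDl sqr_ge0.
Qed.

Lemma Im_le_cmod z : `|complex.Im z| <= cmod z.
Proof.
case: z => a b; rewrite /cmod /= -sqrtr_sqr; apply: ler_wsqrtr.
by rewrite lerDr sqr_ge0.
Qed.

Lemma cmod_real (r : R) : cmod (r%:C)%C = `|r|.
Proof. by rewrite /cmod /= expr0n /= addr0 sqrtr_sqr. Qed.

Lemma closure_distc (A : set (Cx R)) z e : closure A z -> 0 < e ->
  exists2 y, A y & cmod (z - y) < e.
Proof.
move=> Az e_gt0.
have e_gt0' : (0 : Cx R) < (e%:C)%C by rewrite ltcR.
have [y [Ay]] := Az _ (nbhsx_ballx z _ e_gt0').
have normE w : `|w| = (cmod w)%:C%C by case: w.
by rewrite -ball_normE /ball_ /= normE ltcR; exists y.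
Qed.

End ComplexModulus.

Section Tail.
Variables (R : realType) (lam : nat -> Cx R).

Lemma spec_nspec_tail z : spec_diag lam z -> ~ pspec_diag lam z ->
  forall m e, 0 < e -> exists2 i, (m <= i)%N & cmod (z - lam i) < e.
Proof.
move=> z_spec z_nspec; elim=> [|m IH] e e_gt0.
  by have [_ [i _ <-] zi] := closure_distc z_spec e_gt0; exists i.
have zm_gt0 : 0 < cmod (z - lam m).
  by apply: distc_gt0 => zm; apply: z_nspec; exists m.
have [|i m_le_i] := IH (Order.min e (cmod (z - lam m))).
  by rewrite lt_min e_gt0.
rewrite lt_min => /andP[zi_lt_e zi_lt_zm]; exists i => //.
by rewrite ltn_neqAle m_le_i andbT; apply/eqP => mi; rewrite mi ltxx in zi_lt_zm.
Qed.

Lemma exists_tail_index_near m (g : Cx R) (t : R) : 0 < t ->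
  exists i, (m <= i)%N /\ forall z, spec_diag lam z -> ~ pspec_diag lam z ->
    cmod (lam i - g) <= cmod (z - g) + t.
Proof.
move=> t_gt0.
pose E := [set cmod (lam i - g) | i in [set i | (m <= i)%N]].
have E_lb : lbound E 0 by move=> _ [i _ <-]; exact: cmod_ge0.
have E_inf : has_inf E.
  by split; [exists (cmod (lam m - g)); exists m => /= | exists 0].
have [_ [i m_le_i <-] i_near] := inf_adherent t_gt0 E_inf.
exists i; split => // z z_spec z_nspec.
suff : inf E <= cmod (z - g) by lra.
apply/ler_addgt0Pr => e e_gt0.
have [j m_le_j zj] := spec_nspec_tail z_spec z_nspec m e_gt0.
have : inf E <= cmod (lam j - g) by apply: ge_inf; [exists 0 | exists j].
have := distc_triangle (lam j) g z; rewrite (distcC (lam j) z).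
lra.
Qed.

End Tail.

Lemma sum_nat_pred1 (R : realType) (x N : nat) (F : nat -> R) :
  \sum_(0 <= i < N) (if x == i then F i else 0) = if (x < N)%N then F x else 0.
Proof.
elim: N => [|N IH]; first by rewrite big_geq.
rewrite big_nat_recr //= IH ltnS.
have [->|xN] := eqVneq x N; first by rewrite ltnn leqnn add0r.
by rewrite /= addr0 ltn_neqAle xN.
Qed.

Lemma sum_inv_pow2_le (R : realType) N :
  \sum_(0 <= m < N) ((2 ^ m)%:R : R)^-1 <= 2.
Proof.
suff -> : \sum_(0 <= m < N) ((2 ^ m)%:R : R)^-1 = 2 - 2 * ((2 ^ N)%:R)^-1.
  by rewrite gerBl mulr_ge0 ?invr_ge0.
elim: N => [|N IH]; first by rewrite big_geq // expn0 invr1 mulr1 subrr.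
rewrite big_nat_recr //= IH expnS natrM.
have pow_neq0 : ((2 ^ N)%:R : R) != 0 by rewrite pnatr_eq0 expn_eq0.
by field; rewrite pow_neq0.
Qed.

Section Construction.
Variables (R : realType) (lam : nat -> Cx R) (M : R).

Definition grid_radius : R := `|M| + 1.
Definition grid_depth m := (2 ^ m)%N.
Definition grid_side m := (2 ^ grid_depth m)%N.
Definition grid_mesh m : R := 2 * grid_radius / (grid_side m)%:R.
Definition grid_point m (a b : nat) : Cx R :=
  ((- grid_radius + a%:R * grid_mesh m) +i* (- grid_radius + b%:R * grid_mesh m))%C.

Lemma grid_radius_gt0 : 0 < grid_radius.
Proof. by rewrite ltr_pwDr. Qed.

Lemma grid_side_gt0 m : 0 < (grid_side m)%:R :> R.
Proof. by rewrite ltr0n expn_gt0. Qed.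

Lemma grid_mesh_gt0 m : 0 < grid_mesh m.
Proof. by rewrite divr_gt0 ?grid_side_gt0 // mulr_gt0 ?grid_radius_gt0. Qed.

Lemma grid_side_mesh m : (grid_side m)%:R * grid_mesh m = 2 * grid_radius.
Proof. by rewrite mulrC divfK // lt0r_neq0 ?grid_side_gt0. Qed.

Definition grid_index m a b : nat := projT1 (cid
  (exists_tail_index_near lam m (grid_point m a b) (grid_mesh_gt0 m))).

Lemma grid_indexP m a b : (m <= grid_index m a b)%N /\
  forall z, spec_diag lam z -> ~ pspec_diag lam z ->
    cmod (lam (grid_index m a b) - grid_point m a b) <=
      cmod (z - grid_point m a b) + grid_mesh m.
Proof. by rewrite /grid_index; case: cid. Qed.

Definition grid_weight m : R := grid_mesh m ^+ 2 / (grid_depth m)%:R.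

Definition level_weight m i : R :=
  \sum_(0 <= a < grid_side m) \sum_(0 <= b < grid_side m)
    (if grid_index m a b == i then grid_weight m else 0).

Definition coord_sqr i : R :=
  ((2 ^ i)%:R)^-1 + \sum_(0 <= m < i.+1) level_weight m i.

Definition coord i : Cx R := (Num.sqrt (coord_sqr i))%:C%C.

Lemma grid_weight_ge0 m : 0 <= grid_weight m.
Proof. by rewrite divr_ge0 ?sqr_ge0. Qed.

Lemma level_weight_ge0 m i : 0 <= level_weight m i.
Proof.
apply: sumr_ge0 => a _; apply: sumr_ge0 => b _.
by case: eqP => // _; exact: grid_weight_ge0.
Qed.

Lemma level_weight_eq0 m i : (i < m)%N -> level_weight m i = 0.
Proof.
move=> i_lt_m; apply: big1 => a _; apply: big1 => b _.
case: eqP => // idx_eq; have [idx_ge _] := grid_indexP m a b.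
by move: idx_ge; rewrite idx_eq leqNgt i_lt_m.
Qed.

Lemma coord_sqr_gt0 i : 0 < coord_sqr i.
Proof.
rewrite ltr_pwDl ?invr_gt0 ?ltr0n ?expn_gt0 //.
by apply: sumr_ge0 => m _; exact: level_weight_ge0.
Qed.

Lemma cmod_coord_sqr i : cmod (coord i) ^+ 2 = coord_sqr i.
Proof.
by rewrite cmod_real ger0_norm ?sqrtr_ge0 // sqr_sqrtr // ltW ?coord_sqr_gt0.
Qed.

Lemma sum_grid_weight m :
  \sum_(0 <= a < grid_side m) \sum_(0 <= b < grid_side m) grid_weight m =
    4 * grid_radius ^+ 2 / (2 ^ m)%:R.
Proof.
rewrite !sumr_const_nat subn0 /grid_weight -mulr_natr -mulr_natr.
have -> : 4 * grid_radius ^+ 2 = ((grid_side m)%:R * grid_mesh m) ^+ 2.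
  by rewrite grid_side_mesh; ring.
by rewrite /grid_depth; ring.
Qed.

Lemma sum_level_weight_le m N :
  \sum_(0 <= i < N) level_weight m i <= 4 * grid_radius ^+ 2 / (2 ^ m)%:R.
Proof.
rewrite /level_weight exchange_big_nat.
rewrite -sum_grid_weight; apply: ler_sum_nat => a _.
rewrite exchange_big_nat; apply: ler_sum_nat => b _.
by rewrite sum_nat_pred1; case: ifP => // _; exact: grid_weight_ge0.
Qed.

Lemma sum_coord_sqr_le N :
  \sum_(0 <= i < N) coord_sqr i <= 2 + 8 * grid_radius ^+ 2.
Proof.
rewrite big_split /=; apply: lerD; first exact: sum_inv_pow2_le.
apply: (@le_trans _ _ (\sum_(0 <= i < N) \sum_(0 <= m < N) level_weight m i)).
  apply: ler_sum_nat => i /andP[_ i_lt_N].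
  rewrite (@big_cat_nat _ _ _ i.+1 0 N) //= lerDl.
  by apply: sumr_ge0 => m _; exact: level_weight_ge0.
rewrite exchange_big_nat.
apply: (@le_trans _ _ (\sum_(0 <= m < N) 4 * grid_radius ^+ 2 / (2 ^ m)%:R)).
  by apply: ler_sum_nat => m _; exact: sum_level_weight_le.
rewrite -mulr_sumr; have := sum_inv_pow2_le R N; have := sqr_ge0 grid_radius.
nra.
Qed.

Lemma coord_l2 : coord \in @l2 R.
Proof.
rewrite in_setE /l2 /=.
apply: (@le_lt_trans _ _ (2 + 8 * grid_radius ^+ 2)%:E); last exact: ltry.
apply: lime_le; first by apply: is_cvg_nneseries => i _ _; rewrite lee_fin sqr_ge0.
apply: nearW => N; rewrite sumEFin lee_fin.
under eq_bigr do rewrite cmod_coord_sqr.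
exact: sum_coord_sqr_le.
Qed.

Lemma coord_neq0 i : coord i <> 0.
Proof. by move=> [] /eqP; rewrite sqrtr_eq0 leNgt coord_sqr_gt0. Qed.

End Construction.

Section Divergence.
Variables (R : realType) (lam : nat -> Cx R) (M : R) (z : Cx R).
Hypothesis lam_le : forall i, cmod (lam i) <= M.
Hypothesis z_spec : spec_diag lam z.
Hypothesis z_nspec : ~ pspec_diag lam z.

Local Notation r := (grid_radius M).
Local Notation h := (grid_mesh M).
Local Notation idx := (grid_index lam M).

Lemma dist_spec_gt0 i : 0 < cmod (z - lam i).
Proof. by apply: distc_gt0 => zi; apply: z_nspec; exists i. Qed.

Lemma cmod_spec_lt : cmod z < r.
Proof.
have [_ [j _ <-] zj] := closure_distc z_spec (@ltr01 R).
have := cmodD (z - lam j) (lam j); rewrite subrK.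
have := lam_le j; have := ler_norm M; rewrite /grid_radius; lra.
Qed.

Lemma dist_grid_index_le m a b (N : nat) : (0 < N)%N ->
  `|complex.Re z + r - a%:R * h m| <= N%:R * h m ->
  `|complex.Im z + r - b%:R * h m| <= N%:R * h m ->
  cmod (z - lam (idx m a b)) <= 5 * (N%:R * h m).
Proof.
move=> N_gt0 Re_near Im_near.
set g := grid_point M m a b.
have z_g : cmod (z - g) <= 2 * (N%:R * h m).
  have -> : z - g =
      ((complex.Re z + r - a%:R * h m) +i* (complex.Im z + r - b%:R * h m))%C.
    by case: z => x y; rewrite /g /grid_point /=; congr (_ +i* _)%C; ring.
  by apply: le_trans (cmod_le_ReIm _ _) _; lra.
have := distc_triangle z (lam (idx m a b)) g; rewrite (distcC g).
have [_ idx_near] := grid_indexP lam M m a b.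
have := idx_near z z_spec z_nspec; rewrite -/g.
have : h m <= N%:R * h m by rewrite ler_peMl ?ler1n // ltW ?grid_mesh_gt0.
lra.
Qed.

Lemma level_grid_sum_ge m : 3 / 100 <=
  \sum_(0 <= a < grid_side m) \sum_(0 <= b < grid_side m)
    grid_weight M m / cmod (z - lam (idx m a b)) ^+ 2.
Proof.
pose phi a b := h m ^+ 2 / cmod (z - lam (idx m a b)) ^+ 2.
have phi_ge0 a b : 0 <= phi a b by rewrite divr_ge0 ?sqr_ge0.
have phi_ge a b (N : nat) : (0 < N)%N ->
    `|complex.Re z + r - a%:R * h m| <= N%:R * h m ->
    `|complex.Im z + r - b%:R * h m| <= N%:R * h m ->
    (25 * N%:R ^+ 2)^-1 <= phi a b.
  move=> N_gt0 Re_near Im_near.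
  have dist_le := dist_grid_index_le N_gt0 Re_near Im_near.
  have dist_idx_gt0 := dist_spec_gt0 (idx m a b).
  rewrite /phi ler_pdivlMr ?exprn_gt0 // mulrC.
  rewrite ler_pdivrMr ?mulr_gt0 ?exprn_gt0 ?ltr0n //.
  have -> : h m ^+ 2 * (25 * N%:R ^+ 2) = (5 * (N%:R * h m)) ^+ 2 by ring.
  rewrite lerXn2r ?nnegrE ?cmod_ge0 //.
  by rewrite mulr_ge0 // mulr_ge0 // ltW ?grid_mesh_gt0.
have [Re_lt Im_lt] : `|complex.Re z| < r /\ `|complex.Im z| < r.
  split; apply: le_lt_trans cmod_spec_lt; [exact: Re_le_cmod | exact: Im_le_cmod].
move: Re_lt Im_lt; rewrite !ltr_norml => /andP[Re_gt Re_lt] /andP[Im_gt Im_lt].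
have side_h : ((0 + 2 ^ grid_depth m)%N)%:R * h m = 2 * r.
  by rewrite add0n grid_side_mesh.
have := @grid_sum_ge R (h m) (complex.Re z + r) (complex.Im z + r) phi
  (grid_mesh_gt0 M m) phi_ge0 phi_ge (grid_depth m) 0 0.
rewrite mul0r side_h add0n => /(_ ltac:(lra) ltac:(lra) ltac:(lra) ltac:(lra)).
rewrite -ler_pdivlMr ?ltr0n ?expn_gt0 // mulr_suml => /le_trans; apply.
apply: ler_sum_nat => a _; rewrite mulr_suml; apply: ler_sum_nat => b _.
by rewrite /phi /grid_weight mulrAC.
Qed.

Lemma level_partial_sum_ge m N :
  (forall a b, (a < grid_side m)%N -> (b < grid_side m)%N -> (idx m a b < N)%N) ->
  3 / 100 <= \sum_(0 <= i < N) level_weight lam M m i / cmod (z - lam i) ^+ 2.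
Proof.
move=> idx_lt.
have weight_div i : level_weight lam M m i / cmod (z - lam i) ^+ 2 =
    \sum_(0 <= a < grid_side m) \sum_(0 <= b < grid_side m)
      (if idx m a b == i then grid_weight M m / cmod (z - lam i) ^+ 2 else 0).
  rewrite /level_weight mulr_suml; apply: eq_bigr => a _; rewrite mulr_suml.
  by apply: eq_bigr => b _; case: eqP; rewrite ?mul0r.
rewrite (eq_bigr _ (fun i _ => weight_div i)) exchange_big_nat.
apply: le_trans (level_grid_sum_ge m) _.
apply: ler_sum_nat => a /andP[_ a_lt]; rewrite exchange_big_nat.
apply: ler_sum_nat => b /andP[_ b_lt].
by rewrite (sum_nat_pred1 (idx m a b) N
  (fun i => grid_weight M m / cmod (z - lam i) ^+ 2)) idx_lt.
Qed.

Lemma partial_sum_ge K N :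
  (forall m a b, (m < K)%N -> (a < grid_side m)%N -> (b < grid_side m)%N ->
     (idx m a b < N)%N) ->
  3 / 100 * K%:R <= \sum_(0 <= i < N) coord_sqr lam M i / cmod (z - lam i) ^+ 2.
Proof.
move=> idx_lt.
apply: (@le_trans _ _ (\sum_(0 <= m < K) (3 / 100 : R))).
  by rewrite sumr_const_nat subn0 mulr_natr.
apply: (@le_trans _ _ (\sum_(0 <= m < K) \sum_(0 <= i < N)
    level_weight lam M m i / cmod (z - lam i) ^+ 2)).
  apply: ler_sum_nat => m /andP[_ m_lt_K].
  by apply: level_partial_sum_ge => a b; apply: idx_lt.
rewrite exchange_big_nat; apply: ler_sum_nat => i _.
rewrite -mulr_suml ler_wpM2r ?invr_ge0 ?sqr_ge0 //.
apply: (@le_trans _ _ (\sum_(0 <= m < i.+1) level_weight lam M m i)); last first.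
  by rewrite /coord_sqr lerDr invr_ge0 ler0n.
case: (leqP K i.+1) => K_le.
  rewrite (@big_cat_nat _ _ _ K 0 i.+1) //= lerDl.
  by apply: sumr_ge0 => m _; exact: level_weight_ge0.
rewrite (@big_cat_nat _ _ _ i.+1 0 K _ _ (leq0n _) (ltnW K_le)) /=.
have -> : \sum_(i.+1 <= m < K) level_weight lam M m i = 0.
  by rewrite big_nat big1 // => m /andP[i_lt_m _]; exact: level_weight_eq0.
by rewrite addr0.
Qed.

Lemma coord_series_diverges :
  (\sum_(0 <= i <oo)
     ((cmod (coord lam M i) ^+ 2 / cmod (z - lam i) ^+ 2)%:E) = +oo)%E.
Proof.
apply/eqyP => B B_gt0.
pose K := Num.Def.archi_bound (B * 34).
have K_gt : B * 34 < K%:R by apply: archi_boundP; rewrite mulr_ge0 // ltW.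
pose N := (\max_(m < K) \max_(a < grid_side m) \max_(b < grid_side m)
  (idx m a b).+1)%N.
have idx_lt m a b : (m < K)%N -> (a < grid_side m)%N -> (b < grid_side m)%N ->
    (idx m a b < N)%N.
  move=> m_lt a_lt b_lt.
  apply: (leq_trans _ (leq_bigmax (Ordinal m_lt))) => /=.
  apply: (leq_trans _ (leq_bigmax (Ordinal a_lt))) => /=.
  exact: (leq_bigmax (Ordinal b_lt)).
apply: le_trans (nneseries_lim_ge N _); last first.
  by move=> i _ _; rewrite lee_fin divr_ge0 ?sqr_ge0.
rewrite sumEFin lee_fin; under eq_bigr do rewrite cmod_coord_sqr.
apply: le_trans (partial_sum_ge idx_lt); lra.
Qed.

End Divergence.

Theorem proposition5 (R : realType) (lam : nat -> Cx R) :
  bounded_diag lam ->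
  (forall i j : nat, i <> j -> lam i <> lam j) ->
  perfect_set (spec_diag lam) ->
  compact (spec_diag lam) ->
  exists u : nat -> Cx R,
    u \in @l2 R /\
    (forall i : nat, u i <> 0) /\
    (forall z : Cx R, z \in spec_diag lam `\` pspec_diag lam ->
       (\sum_(0 <= i <oo)
          ((cmod (u i) ^+ 2 / cmod (z - lam i) ^+ 2)%:E) = +oo)%E).
Proof.
move=> [M lam_le] _ _ _.
exists (coord lam M); split; first exact: coord_l2.
split; first exact: coord_neq0.
move=> z; rewrite in_setE => -[z_spec z_nspec].
exact: coord_series_diverges.
Qed.
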